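(* For all nonnegative integers $i,j$, \[ l_i(t)\,l_j(t) = \sum_{k\geq 0} n_{i,j,k}\, l_k(t), \] where the polynomials $l_k(t)$ and the numbers $n_{i,j,k}$ are as defined in the context.
   Context: The polynomials $l_k(t)$, $k\ge 0$, are defined by the generating function $\sum_{k=0}^\infty l_k(t)x^k = e^{tx/(1+x)}$. Equivalently, $l_k(t)=(-1)^k L_k^{(-1)}(t)$, where $L_k^{(\alpha)}(t)=\sum_{i=0}^k(-1)^i\binom{k+\alpha}{k-i}\frac{t^i}{i!}$ are the generalized Laguerre polynomials. For example, $l_0=1$, $l_1=t$, $l_2=\tfrac12t^2-t$. A word is a finite sequence of letters; a word is Carlitz if no two adjacent letters are equal. A factorization is an ordered list $(\phi_1)(\phi_2)\cdots(\phi_k)$ of nonempty words, called its parts (factors). $n_{i,j,k}$ denotes the number of factorizations over the alphabet $\{a,b\}$ with exactly $k$ parts, using exactly $i$ copies of $a$ and $j$ copies of $b$ in total, such that each part is a Carlitz word. (For example, $n_{2,5,3}=6$.) *)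

From mathcomp Require Import all_boot all_order all_algebra.
Set Implicit Arguments. Unset Strict Implicit. Unset Printing Implicit Defensive.
Import Order.TTheory GRing.Theory Num.Theory.
Local Open Scope ring_scope.

(* l_k(t) = (-1)^k L_k^{(-1)}(t)
          = (-1)^k \sum_{i=0}^k (-1)^i binom(k-1, k-i) t^i / i!.
   For k = 0 the generalized binomial binom(-1,0) = 1 = 'C(0,0), and the
   truncated nat predecessor 0.-1 = 0 gives exactly this value; for k >= 1
   all binomials are ordinary ones. *)
Definition lpoly (k : nat) : {poly rat} :=
  \sum_(i < k.+1)
     (((-1) ^+ (k + i) * ('C(k.-1, k - i))%:R / (i`!)%:R) *: 'X^i).

(* Words over the alphabet {a,b}: a is encoded by false, b by true. *)
Definition word := seq bool.

Definition carlitz (w : word) : bool := sorted (fun x y => x != y) w.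

Definition words_of_size (m : nat) : seq word :=
  [seq tval t | t : m.-tuple bool].

Definition words_upto (n : nat) : seq word :=
  flatten [seq words_of_size m | m <- iota 1 n].

Fixpoint cands (n k : nat) : seq (seq word) :=
  if k is k'.+1 then [seq w :: f | w <- words_upto n, f <- cands n k']
  else [:: [::]].

Definition is_carlitz_fact (i j k : nat) (f : seq word) : bool :=
  [&& size f == k, all (fun w => (w != [::]) && carlitz w) f,
      count (pred1 false) (flatten f) == i &
      count (pred1 true) (flatten f) == j].

(* n_{i,j,k}: every such factorization has total length i+j, so all its
   parts have length in [1, i+j] and it lies in cands (i+j) k. *)
Definition nfact (i j k : nat) : nat :=
  count (is_carlitz_fact i j k) (cands (i + j) k).

(* With u_m := l_{m+1} + l_m the generating function gives u_m' = l_m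
   (the t-derivative multiplies it by x/(1+x)), so the derivative of u_i u_j
   is l_i u_j + u_i l_j.  On the combinatorial side, the Carlitz words of
   length m are the two alternating ones; stripping the first part of a
   factorization (one letter, ab or ba, or the leading two letters of a
   longer alternating word) gives
     n_{i+1,j+1,k+1} = n_{i,j,k+1} + n_{i,j+1,k} + n_{i+1,j,k} + 2 n_{i,j,k},
   and summing by parts against l_{k+1}' + l_k' = l_k shows that the
   right-hand sides obey the same differential relation.  Both sides vanish at
   t = 0 when i, j > 0, so induction on i + j proves the identity. *)

From mathcomp Require Import all_boot all_order all_algebra zify ring.

Definition na (w : word) : nat := count_mem false w.
Definition nb (w : word) : nat := count_mem true w.

Lemma na_nb w : na w + nb w = size w.
Proof. by rewrite /na /nb; elim: w => //= [[]] w; lia. Qed.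

Fixpoint alt (b : bool) (m : nat) : word :=
  if m is m'.+1 then b :: alt (~~ b) m' else [::].

Lemma size_alt b m : size (alt b m) = m.
Proof. by elim: m b => //= m IH b; rewrite IH. Qed.

Lemma altSS b m : alt b m.+2 = b :: ~~ b :: alt b m.
Proof. by rewrite /= negbK. Qed.

Lemma carlitz_alt b m : carlitz (alt b m).
Proof.
rewrite /carlitz; elim: m b => //= m IH b.
by case: m IH => //= m IH; rewrite IH andbT; case: b.
Qed.

Lemma carlitz_altE w : carlitz w -> w = alt (head false w) (size w).
Proof.
elim: w => //= x [|y w] IH //= /andP[xy cw]; rewrite {}IH //=.
by case: x y xy {cw} => [] [].
Qed.

Definition carlitz_part (w : word) : bool := (w != [::]) && carlitz w.

Lemma sum_carlitz_parts (F : word -> nat) m :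
  \sum_(t : m.+1.-tuple bool) carlitz_part t * F t =
  F (alt false m.+1) + F (alt true m.+1).
Proof.
have altP b : size (alt b m.+1) == m.+1 by rewrite size_alt.
have partP b : carlitz_part (alt b m.+1) by rewrite /carlitz_part carlitz_alt.
rewrite (bigD1 (Tuple (altP false))) // (bigD1 (Tuple (altP true))) //=.
rewrite !partP !mul1n big1 ?addn0 // => t /andP[ne0 ne1].
case/boolP: (carlitz_part t) => // /andP[_ /carlitz_altE].
rewrite size_tuple; case: (head false t) => tE.
- by case/eqP: ne1; apply: val_inj.
- by case/eqP: ne0; apply: val_inj.
Qed.

Lemma is_carlitz_fact_cons i j k w f :
  is_carlitz_fact i j k.+1 (w :: f) =
  [&& carlitz_part w, na w <= i, nb w <= j &
      is_carlitz_fact (i - na w) (j - nb w) k f].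
Proof.
rewrite /is_carlitz_fact /= !count_cat -/(na w) -/(nb w) eqSS.
have eq_addl x y z : (x + y == z) = (x <= z) && (y == z - x).
  by apply/eqP/andP => [<-|[le /eqP ->]]; [rewrite leq_addr addKn | rewrite subnKC].
rewrite !eq_addl /carlitz_part.
set A := all _ f; set B := _ && carlitz w; clearbody A B.
by case: (size f == k) A B (na w <= i) (nb w <= j) => [] [] [] [] [];
  rewrite /= ?andbF.
Qed.

Lemma big_words_upto (F : word -> nat) n :
  \sum_(w <- words_upto n) F w = \sum_(1 <= m < n.+1) \sum_(t : m.-tuple bool) F t.
Proof.
rewrite /words_upto big_flatten big_map /index_iota subn1 /=.
by apply: eq_bigr => m _; rewrite /words_of_size big_image.
Qed.

Lemma big_words_upto_trunc (F : word -> nat) n N :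
  N <= n -> (forall w, N < size w -> F w = 0) ->
  \sum_(w <- words_upto n) F w = \sum_(w <- words_upto N) F w.
Proof.
move=> leNn F0; rewrite !big_words_upto (@big_cat_nat _ _ _ N.+1) //=.
rewrite [X in _ + X]big1_seq ?addn0 // => m /andP[_].
rewrite mem_index_iota => /andP[ltNm _].
by rewrite big1 // => t _; apply: F0; rewrite size_tuple.
Qed.

Lemma count_candsS n i j k :
  count (is_carlitz_fact i j k.+1) (cands n k.+1) =
  \sum_(w <- words_upto n) [&& carlitz_part w, na w <= i & nb w <= j] *
     count (is_carlitz_fact (i - na w) (j - nb w) k) (cands n k).
Proof.
have count_sum (T : Type) (a : pred T) s : count a s = \sum_(x <- s) a x.
  by elim: s => [|x s IH]; rewrite ?big_nil ?big_cons //= IH.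
rewrite count_sum big_allpairs_dep; apply: eq_bigr => w _.
rewrite count_sum big_distrr; apply: eq_bigr => f _ /=.
by rewrite is_carlitz_fact_cons mulnb !andbA.
Qed.

Lemma count_cands_nfact k i j n :
  i + j <= n -> count (is_carlitz_fact i j k) (cands n k) = nfact i j k.
Proof.
elim: k i j n => [//|k IH] i j n le_ij_n.
rewrite /nfact !count_candsS (big_words_upto_trunc _ _ _ le_ij_n) => [|w ltw].
  apply: eq_bigr => w _; case: (boolP [&& _, _ & _]) => // /and3P[_ le_a le_b].
  by rewrite !IH //; lia.
case: (boolP [&& _, _ & _]) => // /and3P[_ le_a le_b].
by have := na_nb w; lia.
Qed.

Definition nfact_after (i j k : nat) (w : word) : nat :=
  if (na w <= i) && (nb w <= j) then nfact (i - na w) (j - nb w) k else 0.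

Lemma nfactS i j k :
  nfact i j k.+1 =
  \sum_(m < i + j)
     (nfact_after i j k (alt false m.+1) + nfact_after i j k (alt true m.+1)).
Proof.
rewrite {1}/nfact count_candsS big_words_upto big_add1 /= big_mkord.
apply: eq_bigr => m _; rewrite -sum_carlitz_parts; apply: eq_bigr => t _.
rewrite /nfact_after; case: (carlitz_part t); case: ifP => //= /andP[le_a le_b].
by rewrite count_cands_nfact //; lia.
Qed.

Lemma nfact_afterSS i j k b s :
  nfact_after i.+1 j.+1 k (b :: ~~ b :: s) = nfact_after i j k s.
Proof.
by rewrite /nfact_after /na /nb; case: b => /=; rewrite ?add0n ?addn0 !add1n !ltnS !subSS.
Qed.

Lemma nfact_after0l j k b s : nfact_after 0 j k (b :: ~~ b :: s) = 0.
Proof. by rewrite /nfact_after /na /nb; case: b. Qed.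

Lemma nfact_after0r i k b s : nfact_after i 0 k (b :: ~~ b :: s) = 0.
Proof. by rewrite /nfact_after /na /nb; case: b => /=; rewrite andbF. Qed.

Lemma nfact0 i j : nfact i j 0 = (i == 0) && (j == 0).
Proof.
by rewrite /nfact /= /is_carlitz_fact /= !(eq_sym 0); case: (i == 0) (j == 0) => [] [].
Qed.

Lemma nfact_eq0 i j k : i + j < k -> nfact i j k = 0.
Proof.
elim: k i j => [//|k IH] i j lt_ij_k; rewrite nfactS big1 // => m _.
suff after0 b : nfact_after i j k (alt b m.+1) = 0 by rewrite !after0.
rewrite /nfact_after; case: ifP => // /andP[le_a le_b]; apply: IH.
by have := na_nb (alt b m.+1); rewrite size_alt; lia.
Qed.

Lemma nfactSSS i j k :
  nfact i.+1 j.+1 k.+1 =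
  nfact i j k.+1 + nfact i j.+1 k + nfact i.+1 j k + 2 * nfact i j k.
Proof.
rewrite nfactS [in RHS]nfactS !addSn addnS !big_ord_recl /=.
under eq_bigr => m _
  do rewrite add0n (nfact_afterSS _ _ _ false) (nfact_afterSS _ _ _ true).
rewrite /nfact_after /na /nb /= !subn1 !subn0 /=; lia.
Qed.

Lemma nfact0l j k : nfact 0 j k = (j == k).
Proof.
elim: k j => [|k IH] [|j]; rewrite ?nfact0 // nfactS ?big_ord0 //.
rewrite add0n big_ord_recl.
rewrite big1 => [|m _]; last by rewrite !altSS !nfact_after0l.
by rewrite /nfact_after /na /nb /= subn1 subn0 addn0 IH.
Qed.

Lemma nfact0r i k : nfact i 0 k = (i == k).
Proof.
elim: k i => [|k IH] [|i]; rewrite ?nfact0 ?andbT // nfactS ?big_ord0 //.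
rewrite addn0 big_ord_recl.
rewrite big1 => [|m _]; last by rewrite !altSS !nfact_after0r.
by rewrite /nfact_after /na /nb /= subn1 subn0 !addn0 IH.
Qed.

Import GRing.Theory Num.Theory.
Local Open Scope ring_scope.

Lemma coef_lpoly k n :
  (lpoly k)`_n =
  if (n <= k)%N then (-1) ^+ (k + n) * ('C(k.-1, k - n))%:R / (n`!)%:R else 0.
Proof.
pose c i : rat := (-1) ^+ (k + i) * ('C(k.-1, k - i))%:R / (i`!)%:R.
by rewrite /lpoly -(poly_def k.+1 c) coef_poly ltnS.
Qed.

Lemma lpoly0 : lpoly 0 = 1.
Proof. by apply/polyP => -[|n]; rewrite coef_lpoly coefC // expr0 mul1r bin0. Qed.

Lemma coef0_lpoly k : (lpoly k)`_0 = (k == 0)%:R.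
Proof.
rewrite coef_lpoly subn0 /=; case: k => [|k]; first by rewrite expr0 mul1r bin0.
by rewrite bin_small // mulr0 mul0r.
Qed.

Lemma deriv_lpolyS k : (lpoly k.+1 + lpoly k)^`() = lpoly k.
Proof.
have fact_neq0 n : (n`!)%:R != 0 :> rat by rewrite pnatr_eq0 -lt0n fact_gt0.
have succ_neq0 n : (n.+1)%:R != 0 :> rat by rewrite pnatr_eq0.
apply/polyP => n; rewrite derivD coefD !coef_deriv !coef_lpoly ltnS.
case: (ltngtP n k) => [lt_nk|_|->]; last 2 first.
- by rewrite mul0rn addr0.
- rewrite mul0rn addr0 subSS !subnn !bin0 factS natrM -addSnnS !exprD !exprS.
  by field; rewrite nat1r succ_neq0 fact_neq0.
have [d ->] : exists d, k = (n + d.+1)%N by exists (k - n.+1)%N; lia.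
have -> : ((n + d.+1).+1 - n.+1 = d.+1)%N by lia.
have -> : (n + d.+1 - n.+1 = d)%N by lia.
have -> : (n + d.+1 - n = d.+1)%N by lia.
rewrite /= !addnS /= binS factS natrM natrD !addSn !exprS.
by field; rewrite nat1r succ_neq0 fact_neq0.
Qed.

Lemma eq_poly_deriv (R : numDomainType) (p q : {poly R}) :
  p^`() = q^`() -> p`_0 = q`_0 -> p = q.
Proof.
move=> /polyP dpq pq0; apply/polyP => -[//|n].
by have /eqP := dpq n; rewrite !coef_deriv -subr_eq0 -mulrnBl mulrn_eq0 subr_eq0 => /eqP.
Qed.

Definition lcomb (c : nat -> rat) (N : nat) : {poly rat} :=
  \sum_(k < N) c k *: lpoly k.

Lemma lcombD (c1 c2 : nat -> rat) N :
  lcomb (fun k => c1 k + c2 k) N = lcomb c1 N + lcomb c2 N.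
Proof. by rewrite -big_split; apply: eq_bigr => k _; rewrite scalerDl. Qed.

Lemma coef0_lcomb c N : (lcomb c N.+1)`_0 = c 0%N.
Proof.
rewrite coef_sum big_ord_recl big1 => [|k _]; last by rewrite coefZ coef0_lpoly mulr0.
by rewrite coefZ coef0_lpoly mulr1 addr0.
Qed.

Lemma deriv_lcomb (c r : nat -> rat) N :
  (forall k, c k.+1 = r k + r k.+1) ->
  (lcomb c N.+1)^`() = lcomb r N + r N *: (lpoly N)^`().
Proof.
move=> cE; elim: N => [|N IH].
  by rewrite /lcomb big_ord1 big_ord0 lpoly0 derivZ -polyC1 derivC !scaler0 add0r.
rewrite /lcomb big_ord_recr derivD derivZ IH big_ord_recr /= cE scalerDl.
by rewrite -[lpoly N in RHS]deriv_lpolyS derivD scalerDr -/(lcomb r N); ring.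
Qed.

Definition nfactr (i j k : nat) : rat := (nfact i j k)%:R.

Lemma deriv_lcomb_nfactSS i j N :
  (i + j.+1 < N)%N ->
  (lcomb (nfactr i.+1 j.+1) N.+1 + lcomb (nfactr i j.+1) N.+1 +
   lcomb (nfactr i.+1 j) N.+1 + lcomb (nfactr i j) N.+1)^`() =
  lcomb (nfactr i j.+1) N + lcomb (nfactr i.+1 j) N + lcomb (nfactr i j) N *+ 2.
Proof.
move=> ltN; pose r k := nfactr i j.+1 k + nfactr i.+1 j k + nfactr i j k *+ 2.
rewrite -!lcombD (deriv_lcomb _ r) => [|k]; last first.
  by rewrite /r /nfactr !mulr2n -!natrD nfactSSS; congr _%:R; lia.
have -> : r N = 0 by rewrite /r /nfactr !nfact_eq0 ?mulr0n ?addr0 ?mul0rn //; lia.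
by rewrite scale0r addr0 !lcombD mulr2n.
Qed.

Lemma deriv_lpolyM_shift i j :
  (lpoly i.+1 * lpoly j.+1 + lpoly i * lpoly j.+1 + lpoly i.+1 * lpoly j +
   lpoly i * lpoly j)^`() =
  lpoly i * lpoly j.+1 + lpoly i.+1 * lpoly j + lpoly i * lpoly j *+ 2.
Proof.
have -> : lpoly i.+1 * lpoly j.+1 + lpoly i * lpoly j.+1 + lpoly i.+1 * lpoly j +
          lpoly i * lpoly j = (lpoly i.+1 + lpoly i) * (lpoly j.+1 + lpoly j) by ring.
by rewrite derivM !deriv_lpolyS; ring.
Qed.

(* The bound N is irrelevant since nfact i j k = 0 for k > i + j; quantifying
   over it lets the induction use its hypotheses at both N and N + 1. *)
Definition product_expands (i j : nat) : Prop :=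
  forall N, (i + j < N)%N -> lpoly i * lpoly j = lcomb (nfactr i j) N.

Lemma lcomb_delta j N : (j < N)%N -> lcomb (fun k => (j == k)%:R) N = lpoly j.
Proof.
move=> lt_jN; rewrite /lcomb (bigD1 (Ordinal lt_jN)) //= eqxx scale1r.
by rewrite big1 ?addr0 // => k /negPf; rewrite eq_sym -val_eqE => ->; rewrite scale0r.
Qed.

Lemma product_expands0l j : product_expands 0 j.
Proof.
move=> N lt_jN; rewrite lpoly0 mul1r -(lcomb_delta _ _ lt_jN).
by apply: eq_bigr => k _; rewrite /nfactr nfact0l.
Qed.

Lemma product_expands0r i : product_expands i 0.
Proof.
move=> N; rewrite addn0 => lt_iN; rewrite lpoly0 mulr1 -(lcomb_delta _ _ lt_iN).
by apply: eq_bigr => k _; rewrite /nfactr nfact0r.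
Qed.

Lemma product_expandsSS i j :
  product_expands i j.+1 -> product_expands i.+1 j -> product_expands i j ->
  product_expands i.+1 j.+1.
Proof.
move=> expA expB expC [//|N] ltN.
have [ltA ltB ltC] : [/\ (i + j.+1 < N)%N, (i.+1 + j < N)%N & (i + j < N)%N].
  by split; lia.
apply: eq_poly_deriv; last first.
  by rewrite coef0_lcomb /nfactr nfact0 coef0M !coef0_lpoly mulr0.
apply: (addIr (lpoly i * lpoly j.+1 + lpoly i.+1 * lpoly j + lpoly i * lpoly j)^`()).
rewrite -!derivD !addrA deriv_lpolyM_shift.
rewrite [in RHS](expA N.+1 (ltnW ltA)) [in RHS](expB N.+1 (ltnW ltB)).
rewrite [in RHS](expC N.+1 (ltnW ltC)) deriv_lcomb_nfactSS //.
by rewrite -(expA N ltA) -(expB N ltB) -(expC N ltC).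
Qed.

Lemma product_expandsP i j : product_expands i j.
Proof.
elim: i j => [|i IHi] j; first exact: product_expands0l.
elim: j => [|j IHj]; first exact: product_expands0r.
exact: product_expandsSS.
Qed.

Theorem lemma2p3 (i j : nat) :
  lpoly i * lpoly j = \sum_(k < (i + j).+1) (nfact i j k)%:R *: lpoly k.
Proof. exact: product_expandsP i j (i + j).+1 (ltnSn _). Qed.
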